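(* Let ${\bf A}=(a(i,j))_{1\le i,j\le n}$ be a real $n\times n$ matrix with no zero row, and suppose $$\min\Big(\min_{1\le i\le n}\#\{j:\ a(i,j)\ne 0\},\ \min_{1\le i\le n}\#\{j:\ a(j,i)\ne 0\}\Big)>n/2.$$ Then the matrix ${\bf A}_{\rm sde}$ associated with ${\bf A}$ (defined below) has $1$ as a simple eigenvalue, and all of its other eigenvalues lie in the open unit disk $\{z\in\mathbb{C}:|z|<1\}$.
   Context: For a real number $t$, $t_+=\max(t,0)$. Define $w_i=\big(\sum_{j=1}^n |a(i,j)|\big)^{-1}$, $\tilde a(i,j)=w_i\,a(i,j)$, $\tilde{\bf A}_+=\big((\tilde a(i,j))_+\big)_{i,j}$, $\tilde{\bf A}_-=\big((-\tilde a(i,j))_+\big)_{i,j}$, and $${\bf A}_{\rm sde}=\begin{pmatrix}\tilde{\bf A}_+ & \tilde{\bf A}_-\\ \tilde{\bf A}_+ & \tilde{\bf A}_-\end{pmatrix}\in\mathbb{R}^{2n\times 2n}.$$ *)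

From HB Require Import structures.
From mathcomp Require Import all_boot all_order all_algebra.
From mathcomp Require Import reals.
From mathcomp.real_closed Require Import complex.
Set Implicit Arguments. Unset Strict Implicit. Unset Printing Implicit Defensive.
Import Order.TTheory GRing.Theory Num.Theory.
Local Open Scope ring_scope.

Section Sde.
Variables (R : realType) (n : nat).
Implicit Type A : 'M[R]_n.

Definition sde_w A (i : 'I_n) : R := (\sum_(j < n) `|A i j|)^-1.
Definition sde_tilde A : 'M[R]_n := \matrix_(i, j) (sde_w A i * A i j).
Definition pospart (t : R) : R := Num.max t 0.
Definition sde_Apos A : 'M[R]_n := \matrix_(i, j) pospart (sde_tilde A i j).
Definition sde_Aneg A : 'M[R]_n := \matrix_(i, j) pospart (- sde_tilde A i j).
Definition A_sde A : 'M[R]_(n + n) :=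
  block_mx (sde_Apos A) (sde_Aneg A) (sde_Apos A) (sde_Aneg A).

Definition row_nnz A (i : 'I_n) : nat := #|[set j : 'I_n | A i j != 0]|.
Definition col_nnz A (i : 'I_n) : nat := #|[set j : 'I_n | A j i != 0]|.

Definition cplx_mx m (M : 'M[R]_m) : 'M[R[i]]_m := map_mx (real_complex R) M.
End Sde.

From HB Require Import structures.
From mathcomp Require Import all_boot all_order all_algebra.
From mathcomp Require Import reals.
From mathcomp.real_closed Require Import complex.
From mathcomp Require Import ring zify.
Set Implicit Arguments. Unset Strict Implicit. Unset Printing Implicit Defensive.
Import Order.TTheory GRing.Theory Num.Theory.
Local Open Scope ring_scope.

(* S := A_+ + A_- has entries w_i |a(i,j)|, so it is row stochastic, and the
   block matrix [[A_+, A_-], [A_+, A_-]] has characteristic polynomial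
   X^n * char_poly S.  Two sets of more than n/2 indices meet, so S^2 has
   positive entries.  For a stochastic T with positive entries, an eigenvector
   for an eigenvalue of modulus >= 1 is constant: at a coordinate of maximal
   modulus, the T-weighted variance of the coordinates around lambda v_i is
   <= 0.  Hence every eigenvalue other than 1 lies in the open unit disk.
   For simplicity, replacing the first column of X - S by ones factors
   char_poly S as q * (X - 1); if q(1) = 0, a kernel vector of the modified
   I - S yields S x = x + c 1, which forces c = 0 by the maximum principle, so
   x is a fixed, hence constant, vector vanishing at 0, a contradiction. *)

Definition stochastic (T : numDomainType) n (S : 'M[T]_n) :=
  (forall i j, 0 <= S i j) /\ (forall i, \sum_j S i j = 1).

Lemma stochastic_mul (T : numDomainType) n (S S' : 'M[T]_n) :
  stochastic S -> stochastic S' -> stochastic (S *m S').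
Proof.
move=> [S_ge0 S_sum] [S'_ge0 S'_sum]; split=> [i j|i].
  by rewrite mxE sumr_ge0 // => k _; rewrite mulr_ge0.
under eq_bigr do rewrite mxE.
rewrite exchange_big /= -[RHS](S_sum i); apply: eq_bigr => k _.
by rewrite -mulr_sumr S'_sum mulr1.
Qed.

Lemma char_poly_trmx (T : comNzRingType) m (M : 'M[T]_m) :
  char_poly M^T = char_poly M.
Proof.
rewrite /char_poly -det_tr; congr (\det _).
by apply/matrixP => i j; rewrite !mxE eq_sym.
Qed.

Section PrimitiveStochastic.
Variables (C : numClosedFieldType) (n : nat).

Lemma sum_norm_sub_mean (p v : 'I_n -> C) :
  (forall k, 0 <= p k) -> \sum_k p k = 1 ->
  \sum_k p k * `|v k - \sum_l p l * v l| ^+ 2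
    = \sum_k p k * `|v k| ^+ 2 - `|\sum_k p k * v k| ^+ 2.
Proof.
move=> p_ge0 p_sum; set z := \sum_k p k * v k.
have zC : z^* = \sum_k p k * (v k)^*.
  rewrite rmorph_sum; apply: eq_bigr => k _.
  by rewrite rmorphM /= (geC0_conj (p_ge0 k)).
have expand k : p k * `|v k - z| ^+ 2 = p k * (v k * (v k)^*) - p k * v k * z^*
    - z * (p k * (v k)^*) + p k * (z * z^*).
  by rewrite normCK rmorphB; ring.
under eq_bigr do rewrite expand.
rewrite !big_split /= !sumrN -!mulr_suml -mulr_sumr -zC -/z p_sum mul1r.
under [X in _ = X - _]eq_bigr do rewrite normCK.
by rewrite normCK; ring.
Qed.

Lemma positive_stochastic_eigvec_const (T : 'M[C]_n) (v : 'cV[C]_n) l :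
  stochastic T -> (forall i j, 0 < T i j) ->
  1 <= `|l| -> T *m v = l *: v -> forall j k, v j 0 = v k 0.
Proof.
move=> [T_ge0 T_sum] T_gt0 l_ge1 Tv j k.
have [i _ v_le] := @real_arg_maxP _ _ j xpredT (fun m => `|v m 0|) isT
  (fun m _ => normr_real _).
set z := l * v i 0.
have Tvi : \sum_m T i m * v m 0 = z.
  by move/matrixP/(_ i 0): Tv; rewrite !mxE.
have dev_ge0 m : 0 <= T i m * `|v m 0 - z| ^+ 2.
  by rewrite mulr_ge0 ?T_ge0 ?exprn_ge0.
have dev_le0 : \sum_m T i m * `|v m 0 - z| ^+ 2 <= 0.
  rewrite -Tvi sum_norm_sub_mean // Tvi subr_le0.
  apply: (@le_trans _ _ (`|v i 0| ^+ 2)).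
    rewrite -[leRHS]mul1r -(T_sum i) mulr_suml; apply: ler_sum => m _.
    by rewrite ler_wpM2l // lerXn2r ?nnegrE //; apply: v_le.
  by rewrite lerXn2r ?nnegrE // normrM ler_peMl.
have dev_eq0 : \sum_m T i m * `|v m 0 - z| ^+ 2 = 0.
  by apply/le_anti; rewrite dev_le0 sumr_ge0.
have v_eq m : v m 0 = z.
  have /eqP := psumr_eq0P (fun m _ => dev_ge0 m) dev_eq0 (i := m) isT.
  by rewrite mulf_eq0 gt_eqF //= expf_eq0 normr_eq0 subr_eq0 => /eqP.
by rewrite !v_eq.
Qed.

Lemma primitive_stochastic_eigvec_const (S : 'M[C]_n) (v : 'cV[C]_n) l :
  stochastic S -> (forall i j, 0 < (S *m S) i j) ->
  1 <= `|l| -> S *m v = l *: v -> forall j k, v j 0 = v k 0.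
Proof.
move=> S_st SS_gt0 l_ge1 Sv.
apply: (positive_stochastic_eigvec_const (l := l ^+ 2)
  (stochastic_mul S_st S_st) SS_gt0).
  by rewrite normrX exprn_ege1.
by rewrite -mulmxA Sv -scalemxAr Sv scalerA -expr2.
Qed.

Lemma primitive_stochastic_eigenvalue_lt1 (S : 'M[C]_n) z :
  stochastic S -> (forall i j, 0 < (S *m S) i j) ->
  root (char_poly S) z -> z != 1 -> `|z| < 1.
Proof.
move=> S_st SS_gt0 Sz z_neq1.
rewrite -char_poly_trmx -eigenvalue_root_char in Sz.
have [v vSz v_neq0] := eigenvalueP Sz.
have Svz : S *m v^T = z *: v^T by rewrite -[S]trmxK -trmx_mul vSz linearZ.
rewrite -trmx_eq0 in v_neq0; move: (v^T) v_neq0 Svz => {vSz}v v_neq0 Svz.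
rewrite real_ltNge ?normr_real ?real1 //; apply: contra z_neq1 => z_ge1.
have v_const := primitive_stochastic_eigvec_const S_st SS_gt0 z_ge1 Svz.
have [i vi_neq0] : exists i, v i 0 != 0.
  apply/existsP; apply: contraR v_neq0 => /existsPn v_eq0.
  by apply/eqP/colP => i; have := v_eq0 i; rewrite mxE negbK => /eqP.
move/matrixP/(_ i 0): Svz; rewrite !mxE.
under eq_bigr do rewrite (v_const _ i).
rewrite -mulr_suml (proj2 S_st) mul1r => /eqP.
by rewrite -{1}(mul1r (v i 0)) (inj_eq (mulIf vi_neq0)) eq_sym.
Qed.

End PrimitiveStochastic.

Definition col0_ones (T : pzSemiRingType) n (M : 'M[T]_n.+1) : 'M[T]_n.+1 :=
  \matrix_(i, j) if j == ord0 then 1 else M i j.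

Lemma col0_ones_mulmx (T : pzRingType) n (M : 'M[T]_n.+1) (u : 'cV[T]_n.+1) :
  col0_ones M *m u
  = M *m (u - u ord0 0 *: delta_mx ord0 0) + u ord0 0 *: const_mx 1.
Proof.
apply/colP => i; rewrite /col0_ones !mxE !big_ord_recl !mxE /= mulr1 mul1r.
rewrite subrr mulr0 add0r addrC; congr (_ + _); apply: eq_bigr => j _.
by rewrite !mxE [lift _ _ == _]eq_sym (negbTE (neq_lift _ _)) mulr0 subr0.
Qed.

Lemma det_col0_ones (T : comNzRingType) n (M : 'M[T]_n.+1) c :
  (forall i, \sum_j M i j = c) -> \det M = \det (col0_ones M) * c.
Proof.
move=> M_sum.
(* Right multiplication by Q adds all the columns to the first one. *)
pose Q : 'M[T]_n.+1 := col0_ones 1%:M.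
pose d : 'rV[T]_n.+1 := \row_j if j == ord0 then c else 1.
have Q_lower : is_trig_mx Q.
  apply/is_trig_mxP => i j lt_ij; rewrite !mxE.
  case: eqP => [j0|_]; first by rewrite j0 ltn0 in lt_ij.
  by move: lt_ij; case: eqP => // ->; rewrite ltnn.
have det_Q : \det Q = 1.
  by rewrite det_trig // big1 // => i _; rewrite !mxE eqxx; case: ifP.
have det_d : \det (diag_mx d) = c.
  by rewrite det_diag big_ord_recl big1 => [|i _]; rewrite !mxE ?eqxx ?mulr1.
have col_ops : M *m Q = col0_ones M *m diag_mx d.
  rewrite mul_mx_diag; apply/matrixP => i j; rewrite !mxE.
  have [->|j_neq0] := eqVneq j ord0; last first.
    rewrite (bigD1 j) //= big1 => [|k k_neq_j]; rewrite !mxE (negbTE j_neq0).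
      by rewrite eqxx mulr1 addr0.
    by rewrite (negbTE k_neq_j) mulr0.
  by rewrite mul1r -(M_sum i); apply: eq_bigr => k _; rewrite !mxE eqxx mulr1.
by rewrite -[LHS]mulr1 -det_Q -det_mulmx col_ops det_mulmx det_d.
Qed.

Lemma map_col0_ones (T T' : pzSemiRingType) (f : {rmorphism T -> T'}) n
    (M : 'M[T]_n.+1) :
  map_mx f (col0_ones M) = col0_ones (map_mx f M).
Proof. by apply/matrixP => i j; rewrite !mxE; case: ifP; rewrite ?rmorph1. Qed.

Lemma char_poly_row_stochastic (T : comNzRingType) n (M : 'M[T]_n.+1) :
  (forall i, \sum_j M i j = 1) ->
  char_poly M = \det (col0_ones (char_poly_mx M)) * ('X - 1).
Proof.
move=> M_sum; apply: det_col0_ones => i.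
under eq_bigr do rewrite !mxE.
rewrite sumrB -rmorph_sum M_sum (bigD1 i) //= big1 ?addr0 ?eqxx // => j.
by rewrite eq_sym => /negbTE->.
Qed.

Lemma horner_det_col0_ones_char_poly_mx (T : comNzRingType) n
    (M : 'M[T]_n.+1) a :
  (\det (col0_ones (char_poly_mx M))).[a] = \det (col0_ones (a%:M - M)).
Proof.
rewrite -horner_evalE -det_map_mx map_col0_ones.
congr (\det (col0_ones _)); apply/matrixP => i j.
by rewrite !mxE -[LHS]/(_.[a]) hornerD hornerN hornerMn hornerX hornerC.
Qed.

Lemma mup0 (F : fieldType) (x : F) : mup x 0 = 0%N.
Proof.
rewrite /mup; case: arg_maxnP => [|i _ _]; first exact: dvdp0.
by case: i => -[|k] //; rewrite size_poly0.
Qed.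

Lemma mup_map (F K : fieldType) (f : {rmorphism F -> K}) x (p : {poly F}) :
  mup (f x) (map_poly f p) = mup x p.
Proof.
have [->|p_neq0] := eqVneq p 0; first by rewrite map_poly0 !mup0.
have fp_neq0 : map_poly f p != 0 by rewrite map_poly_eq0.
have fXx k : ('X - (f x)%:P) ^+ k = map_poly f (('X - x%:P) ^+ k).
  by rewrite rmorphXn rmorphB /= map_polyX map_polyC.
apply/eqP; rewrite eqn_leq mup_geq // -(dvdp_map f) -fXx -mup_geq // leqnn.
by rewrite mup_geq // fXx dvdp_map -mup_geq // leqnn.
Qed.

Section StochasticSimpleRoot.
Variables (F : realFieldType) (n : nat) (S : 'M[F]_n.+1).
Hypothesis S_st : stochastic S.

Lemma stochastic_shift_le0 (x : 'cV[F]_n.+1) c :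
  S *m x = x + c *: const_mx 1 -> c <= 0.
Proof.
case: S_st => S_ge0 S_sum Sx.
have [i _ x_le] := @real_arg_maxP _ _ ord0 xpredT (x^~ 0) isT
  (fun m _ => num_real _).
move/matrixP/(_ i 0): Sx; rewrite !mxE mulr1 => Sxi.
rewrite -(lerD2l (x i 0)) addr0 -Sxi -[leRHS]mul1r -(S_sum i) mulr_suml.
by apply: ler_sum => j _; rewrite ler_wpM2l //; apply: x_le.
Qed.

Lemma stochastic_shift_eq0 (x : 'cV[F]_n.+1) c :
  S *m x = x + c *: const_mx 1 -> c = 0.
Proof.
move=> Sx; apply/le_anti; rewrite (stochastic_shift_le0 Sx) /= -oppr_le0.
by apply: (@stochastic_shift_le0 (- x)); rewrite mulmxN Sx opprD scaleNr.
Qed.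

Hypothesis S_fixed_const :
  forall x : 'cV[F]_n.+1, S *m x = x -> forall j k, x j 0 = x k 0.

Lemma det_col0_ones_subr_neq0 : \det (col0_ones (1%:M - S)) != 0.
Proof.
rewrite -det_tr; apply/det0P => -[v v_neq0 vN].
have : col0_ones (1%:M - S) *m v^T = 0.
  by apply: trmx_inj; rewrite trmx_mul trmxK trmx0.
rewrite -trmx_eq0 in v_neq0; move: (v^T) v_neq0 => {vN}u u_neq0.
rewrite col0_ones_mulmx; set c := u ord0 0; set x := u - c *: _.
rewrite mulmxBl mul1mx => /eqP; rewrite addrAC subr_eq0 => /eqP/esym Sx.
have c0 : c = 0 := stochastic_shift_eq0 Sx.
rewrite c0 scale0r addr0 in Sx.
have x0 j : x j 0 = 0.
  by rewrite (S_fixed_const Sx j 0) !mxE eqxx mulr1 -/c subrr.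
move/negP: u_neq0; apply; apply/eqP/colP => j.
by rewrite -[u](subrK (c *: delta_mx ord0 0)) -/x c0 scale0r addr0 x0 mxE.
Qed.

Lemma mup_char_poly_stochastic : mup 1 (char_poly S) = 1%N.
Proof.
rewrite char_poly_row_stochastic; last by case: S_st.
rewrite mupMr; last first.
  by rewrite rootE horner_det_col0_ones_char_poly_mx det_col0_ones_subr_neq0.
by rewrite -polyC1 -[_ - _]expr1 mup_XsubCX eqxx.
Qed.

End StochasticSimpleRoot.

Section Complexification.
Variables (R : realType) (n : nat) (S : 'M[R]_n).

Lemma cplx_mx_stochastic : stochastic S -> stochastic (cplx_mx S).
Proof.
move=> [S_ge0 S_sum]; split=> [i j|i]; first by rewrite mxE lecR.
by under eq_bigr do rewrite mxE; rewrite -rmorph_sum S_sum rmorph1.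
Qed.

Lemma cplx_mx_mul_gt0 : (forall i j, 0 < (S *m S) i j) ->
  forall i j, 0 < (cplx_mx S *m cplx_mx S) i j.
Proof. by move=> SS_gt0 i j; rewrite -map_mxM mxE ltcR. Qed.

Lemma primitive_stochastic_fixed_const :
  stochastic S -> (forall i j, 0 < (S *m S) i j) ->
  forall x : 'cV[R]_n, S *m x = x -> forall j k, x j 0 = x k 0.
Proof.
move=> S_st SS_gt0 x Sx j k; apply: (@complexI R).
have := primitive_stochastic_eigvec_const (cplx_mx_stochastic S_st)
  (cplx_mx_mul_gt0 SS_gt0) (l := 1) (v := map_mx (real_complex R) x).
by rewrite normr1 scale1r -map_mxM Sx => /(_ (lexx _) erefl j k); rewrite !mxE.
Qed.

End Complexification.

Lemma pospart_add_oppr (R : realType) (t : R) :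
  pospart t + pospart (- t) = `|t|.
Proof.
rewrite /pospart; have [t_ge0|t_lt0] := leP 0 t.
  by rewrite (max_idPr _) ?addr0 ?ger0_norm // oppr_le0.
by rewrite (max_idPl _) ?add0r ?ltr0_norm // oppr_ge0 ltW.
Qed.

Lemma char_poly_block_mx_dup (T : comNzRingType) n (P N : 'M[T]_n) :
  char_poly (block_mx P N P N) = 'X^n * char_poly (P + N).
Proof.
rewrite /char_poly /char_poly_mx map_block_mx (scalar_mx_block n n).
rewrite opp_block_mx add_block_mx.
set X : 'M[{poly T}]_n := 'X%:M.
set P' := map_mx polyC P; set N' := map_mx polyC N.
pose L : 'M[{poly T}]_(n + n) := block_mx 1%:M 0 (-1%:M) 1%:M.
pose U : 'M[{poly T}]_(n + n) := block_mx 1%:M 0 1%:M 1%:M.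
have det_L : \det L = 1 by rewrite det_lblock !det1 mulr1.
have det_U : \det U = 1 by rewrite det_lblock !det1 mulr1.
rewrite -[LHS]mul1r -det_L -[LHS]mulr1 -det_U -!det_mulmx !mulmx_block.
rewrite !(mul1mx, mul0mx, mulmx1, mulmx0, mulNmx, addr0, add0r).
rewrite (_ : block_mx _ _ _ _ = block_mx (X - (P' + N')) (- N') 0 X).
  by rewrite det_ublock det_scalar mulrC map_mxD.
by congr block_mx; apply/matrixP => i j; rewrite !mxE; ring.
Qed.

Section SdeMatrix.
Variables (R : realType) (n : nat) (A : 'M[R]_n).

Definition sde_abs : 'M[R]_n := sde_Apos A + sde_Aneg A.

Lemma sde_absE i j : sde_abs i j = sde_w A i * `|A i j|.
Proof.
rewrite !mxE pospart_add_oppr normrM ger0_norm // invr_ge0.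
by apply: sumr_ge0 => k _.
Qed.

Lemma char_poly_A_sde :
  char_poly (cplx_mx (A_sde A)) = 'X^n * char_poly (cplx_mx sde_abs).
Proof. by rewrite /cplx_mx map_block_mx char_poly_block_mx_dup -map_mxD. Qed.

Hypothesis A_row_neq0 : forall i, exists j, A i j != 0.

Lemma sde_w_gt0 i : 0 < sde_w A i.
Proof.
have [j Aij_neq0] := A_row_neq0 i.
rewrite invr_gt0 (bigD1 j) //= ltr_pwDl ?normr_gt0 //.
by apply: sumr_ge0 => k _.
Qed.

Lemma sde_abs_gt0 i j : (0 < sde_abs i j) = (A i j != 0).
Proof. by rewrite sde_absE pmulr_rgt0 ?sde_w_gt0 ?normr_gt0. Qed.

Lemma sde_abs_stochastic : stochastic sde_abs.
Proof.
split=> [i j|i]; first by rewrite sde_absE mulr_ge0 ?normr_ge0 ?ltW ?sde_w_gt0.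
under eq_bigr do rewrite sde_absE.
by rewrite -mulr_sumr mulVf // -invr_eq0 lt0r_neq0 ?sde_w_gt0.
Qed.

Lemma sde_abs_mul_gt0 :
  (forall i k, exists j, A i j != 0 /\ A j k != 0) ->
  forall i k, 0 < (sde_abs *m sde_abs) i k.
Proof.
move=> A_path i k; have [j [Aij Ajk]] := A_path i k.
have [S_ge0 _] := sde_abs_stochastic.
rewrite mxE (bigD1 j) //= ltr_pwDl ?mulr_gt0 ?sde_abs_gt0 //.
by apply: sumr_ge0 => l _; rewrite mulr_ge0.
Qed.

End SdeMatrix.

Lemma majority_setI_neq0 (T : finType) (X Y : {set T}) :
  (#|T| < #|X|.*2)%N -> (#|T| < #|Y|.*2)%N -> exists x, x \in X :&: Y.
Proof.
move=> X_large Y_large; apply/set0Pn; rewrite -card_gt0.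
by have := cardsUI X Y; have := max_card (X :|: Y); lia.
Qed.

Lemma half_ltr_nat (R : numFieldType) m k :
  (m%:R / 2 : R) < k%:R -> (m < k.*2)%N.
Proof. by rewrite ltr_pdivrMr // -natrM ltr_nat muln2. Qed.

Theorem proposition3 (R : realType) (n : nat) (A : 'M[R]_n) :
  (0 < n)%N ->
  (forall i : 'I_n, exists j : 'I_n, A i j != 0) ->
  (forall i : 'I_n, (n%:R / 2 : R) < (row_nnz A i)%:R) ->
  (forall i : 'I_n, (n%:R / 2 : R) < (col_nnz A i)%:R) ->
  let p := char_poly (cplx_mx (A_sde A)) in
  mup 1 p = 1%N /\
  (forall z : R[i], root p z -> z != 1 -> `|z| < 1).
Proof.
case: n A => [//|n] A _ A_row_neq0 row_large col_large p.
have S_st := sde_abs_stochastic A_row_neq0.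
have SS_gt0 : forall i k, 0 < (sde_abs A *m sde_abs A) i k.
  apply: sde_abs_mul_gt0 => // i k.
  have [j] : exists j, j \in [set j | A i j != 0] :&: [set j | A j k != 0].
    apply: majority_setI_neq0; rewrite card_ord.
      exact: half_ltr_nat (row_large i).
    exact: half_ltr_nat (col_large k).
  by rewrite !inE => /andP; exists j.
rewrite /p char_poly_A_sde; split.
  rewrite mupMr; last by rewrite rootE hornerXn expr1n oner_eq0.
  rewrite /cplx_mx -map_char_poly -(rmorph1 (real_complex R)) mup_map.
  exact/mup_char_poly_stochastic/primitive_stochastic_fixed_const.
move=> z; rewrite rootM rootE hornerXn expf_eq0 /= => /orP[/eqP-> _|].
  by rewrite normr0 ltr01.
apply: primitive_stochastic_eigenvalue_lt1.
  exact: cplx_mx_stochastic.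
exact: cplx_mx_mul_gt0.
Qed.
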